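(* Assume $I_\delta=0$. Let $S\in\mathsf{X}$ be $\delta$-admissible and $G=\mathcal{G}(S)$. Then $$\|G\|_\infty\le C,\qquad \operatorname{supp}G\subseteq[-C\delta,C\delta],\qquad \Big|\int_{\mathbb{R}}G(x)\,dx\Big|\le C\big(1+\|S''\|_\infty\big)\delta^2$$ for a constant $C$ independent of $S$, $\delta$, $c\in[c_0,c_1]$ and $R_0\in\mathcal{R}_c$.
   Context: $\Delta_1F(x)=F(x+1)-2F(x)+F(x-1)$, $a(k)=\frac{\sin(k/2)}{k/2}$, $\Psi_0'(r)=\mathrm{sgn}(r)$. Potentials: $(\Psi_\delta)_{\delta>0}$ is a family of $C^2$ functions such that $\Psi_\delta'(r)=\mathrm{sgn}(r)$ for $r\notin(-\delta,\delta)$, and $|\Psi_\delta'|\le C_\Psi$, $|\Psi_\delta''|\le C_\Psi/\delta$ on $\mathbb{R}$ with $C_\Psi$ independent of $\delta$; $I_\delta:=\frac12\int_{\mathbb{R}}(\Psi_\delta'-\Psi_0')\,dr$. Unperturbed waves (standing hypothesis, a known result): there are constants $0<c_0<1$ and $x_0,r_0,d_0,D_0>0$ such that for every $c\in[c_0,1)$ the equation $a(k)=c$ has exactly one positive solution $k_c$, and there is a two-parameter family $\mathcal{R}_c$ of functions $R_0\in W^{2,\infty}(\mathbb{R})$ solving $c^2R_0''=\Delta_1(R_0-\mathrm{sgn}(R_0))$ with $R_0(0)=0$, given by $R_0=\bar R_0+\alpha(\cos(k_c\cdot)-1)+\beta\sin(k_c\cdot)$, $(\alpha,\beta)$ in an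 open neighbourhood $U_c$ of $0\in\mathbb{R}^2$, where $\bar R_0$ is a fixed member for which $\lim_{x\to+\infty}\bar R_0(x)$ exists and $\lim_{x\to-\infty}(\bar R_0(x)-\alpha_c^-(\cos(k_cx)-1)-\beta_c^-\sin(k_cx))$ exists for some constants $\alpha_c^-,\beta_c^-$. Every $R_0\in\mathcal{R}_c$ satisfies $\|R_0\|_\infty\le D_0(1-c^2)^{-1}$, $R_0(x)>r_0$ for $x>x_0$, $R_0(x)<-r_0$ for $x<-x_0$, $R_0'(x)>d_0$ for $|x|<x_0$. Setting: $c_1\in(c_0,1)$ fixed, $c\in[c_0,c_1]$, $R_0\in\mathcal{R}_c$ fixed. $\mathsf{X}:=\{S\in W^{2,\infty}(\mathbb{R}):S(0)=0,\ \lim_{x\to+\infty}S(x)\text{ exists}\}$. $\mathcal{G}(S)(x):=\Psi_\delta'(R_0(x)+S(x))-\Psi_0'(R_0(x))$. $S\in\mathsf{X}$ is called $\delta$-admissible if there exist $x_-<0<x_+$ with: $R_0(x_\pm)+S(x_\pm)=\pm\delta$; $R_0(x)+S(x)<-\delta$ for $x<x_-$; $R_0(x)+S(x)>\delta$ for $x>x_+$; and $\frac12R_0'(0)<R_0'(x)+S'(x)<2R_0'(0)$ for $x_-<x<x_+$. *)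

From Stdlib Require Import Reals.
Open Scope R_scope.

(* sign function, sgn 0 = 0 ; Psi_0' = sgn *)
Definition sgn (r : R) : R :=
  if Rlt_dec 0 r then 1 else if Rlt_dec r 0 then -1 else 0.

Definition Delta1 (F : R -> R) (x : R) : R := F (x + 1) - 2 * F x + F (x - 1).

Definition a_sym (k : R) : R := sin (k / 2) / (k / 2).

Definition bounded (f : R -> R) : Prop := exists M, forall x, Rabs (f x) <= M.

Definition lipschitz (f : R -> R) (L : R) : Prop :=
  forall x y, Rabs (f x - f y) <= L * Rabs (x - y).

(* W^{2,infty}(R): bounded C^1 function whose derivative is bounded and
   Lipschitz (equivalently, W^{1,infty}); ||f''||_infty = best Lipschitz
   constant of f'. *)
Definition W2inf (f : R -> R) : Prop :=
  exists f' : R -> R,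
    (forall x, derivable_pt_lim f x (f' x)) /\ bounded f /\ bounded f' /\
    exists L, lipschitz f' L.

Definition has_lim_pinf (f : R -> R) : Prop :=
  exists l, forall eps, 0 < eps -> exists M, forall x, M < x -> Rabs (f x - l) < eps.

Definition has_lim_minf (f : R -> R) : Prop :=
  exists l, forall eps, 0 < eps -> exists M, forall x, x < M -> Rabs (f x - l) < eps.

(* c^2 R0'' = Delta_1 (R0 - sgn R0), in integrated (a.e.) form:
   R0'(y) - R0'(x) = c^{-2} int_x^y Delta_1(R0 - sgn R0). *)
Definition solves_wave_eq (c : R) (f : R -> R) : Prop :=
  forall f' : R -> R, (forall x, derivable_pt_lim f x (f' x)) ->
  forall x y, exists pr : Riemann_integrable
                 (Delta1 (fun s => f s - sgn (f s))) x y,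
    f' y - f' x = RiemannInt pr / c ^ 2.

Definition open2 (U : R -> R -> Prop) : Prop :=
  forall a b, U a b -> exists e, 0 < e /\
    forall a' b', Rabs (a' - a) < e -> Rabs (b' - b) < e -> U a' b'.

Definition unperturbed_waves (c0 x0 r0 d0 D0 : R) (Rc : R -> (R -> R) -> Prop) : Prop :=
  0 < c0 < 1 /\ 0 < x0 /\ 0 < r0 /\ 0 < d0 /\ 0 < D0 /\
  forall c, c0 <= c < 1 ->
    exists kc, 0 < kc /\ a_sym kc = c /\
      (forall k, 0 < k -> a_sym k = c -> k = kc) /\
      exists (Rbar : R -> R) (U : R -> R -> Prop),
        open2 U /\ U 0 0 /\
        (forall R0, Rc c R0 <-> exists al be, U al be /\
            R0 = (fun x => Rbar x + al * (cos (kc * x) - 1) + be * sin (kc * x))) /\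
        has_lim_pinf Rbar /\
        (exists alm bem, has_lim_minf
           (fun x => Rbar x - alm * (cos (kc * x) - 1) - bem * sin (kc * x))) /\
        forall R0, Rc c R0 ->
          W2inf R0 /\ solves_wave_eq c R0 /\ R0 0 = 0 /\
          (forall x, Rabs (R0 x) <= D0 / (1 - c ^ 2)) /\
          (forall x, x0 < x -> r0 < R0 x) /\
          (forall x, x < - x0 -> R0 x < - r0) /\
          (forall dR0 : R -> R, (forall x, derivable_pt_lim R0 x (dR0 x)) ->
             forall x, Rabs x < x0 -> d0 < dR0 x).

Definition potential_family (Psi dPsi ddPsi : R -> R -> R) (CPsi : R) : Prop :=
  forall delta, 0 < delta ->
    (forall r, derivable_pt_lim (Psi delta) r (dPsi delta r)) /\
    (forall r, derivable_pt_lim (dPsi delta) r (ddPsi delta r)) /\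
    continuity (ddPsi delta) /\
    (forall r, (r <= - delta \/ delta <= r) -> dPsi delta r = sgn r) /\
    (forall r, Rabs (dPsi delta r) <= CPsi) /\
    (forall r, Rabs (ddPsi delta r) <= CPsi / delta).

(* I_delta = 1/2 int_R (Psi_delta' - Psi_0') = 0; the integrand vanishes
   outside (-delta, delta). *)
Definition I_zero (dPsi : R -> R -> R) (delta : R) : Prop :=
  exists pr : Riemann_integrable (fun r => dPsi delta r - sgn r) (- delta) delta,
    RiemannInt pr = 0.

Definition inX (S : R -> R) : Prop := W2inf S /\ S 0 = 0 /\ has_lim_pinf S.

Definition admissible (delta : R) (R0 dR0 S dS : R -> R) : Prop :=
  exists xm xp, xm < 0 < xp /\
    R0 xm + S xm = - delta /\ R0 xp + S xp = delta /\
    (forall x, x < xm -> R0 x + S x < - delta) /\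
    (forall x, xp < x -> delta < R0 x + S x) /\
    (forall x, xm < x < xp ->
       dR0 0 / 2 < dR0 x + dS x /\ dR0 x + dS x < 2 * dR0 0).

Definition Gmap (dPsi : R -> R -> R) (delta : R) (R0 S : R -> R) (x : R) : R :=
  dPsi delta (R0 x + S x) - sgn (R0 x).

(* Uniform properties of the unperturbed waves come first: R0 has
   the sign of x, R0'(0) > d0, and the wave equation makes R0' Lipschitz with a
   constant L0 depending only on c0, c1, D0.  Admissibility then forces the
   transition layer of phi = R0 + S into |x| <= (2/d0) delta, since phi climbs
   from -delta to delta with slope at least d0/2; outside it G vanishes.  For
   the integral, write a = phi'(0) and split
     G(x) = [Psi'(phi x) - Psi'(a x)] + [Psi'(a x) - sgn(a x)].
   The second term has integral zero by I_delta = 0 after the substitution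
   r = a x; the first is bounded by (C_Psi/delta) (L0 + L) x^2 by a first-order
   Taylor estimate and lives on |x| <= (2/d0) delta, so its integral is
   O((L0 + L) delta^2). *)

From Stdlib Require Import Reals Lra.
From Coquelicot Require Import Coquelicot.
Open Scope R_scope.

Lemma sgn_pos (r : R) : 0 < r -> sgn r = 1.
Proof. intros h; unfold sgn; destruct (Rlt_dec 0 r); lra. Qed.

Lemma sgn_neg (r : R) : r < 0 -> sgn r = -1.
Proof. intros h; unfold sgn; destruct (Rlt_dec 0 r); [lra|]; destruct (Rlt_dec r 0); lra. Qed.

Lemma sgn_abs_le (r : R) : Rabs (sgn r) <= 1.
Proof.
  unfold sgn; destruct (Rlt_dec 0 r); [|destruct (Rlt_dec r 0)];
    unfold Rabs; destruct Rcase_abs; lra.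
Qed.

Lemma sgn_scale (a x : R) : 0 < a -> sgn (a * x) = sgn x.
Proof.
  intros ha. destruct (Rtotal_order x 0) as [h|[->|h]].
  - rewrite !sgn_neg; nra.
  - now rewrite Rmult_0_r.
  - rewrite !sgn_pos; nra.
Qed.

Lemma increment_bound (f f' : R -> R) (B : R) :
  (forall t, derivable_pt_lim f t (f' t)) -> (forall t, Rabs (f' t) <= B) ->
  forall x y, Rabs (f x - f y) <= B * Rabs (x - y).
Proof.
  intros hd hb x y.
  destruct (MVT_abs f f' y x) as [z [hz _]]; [intros; apply hd|].
  rewrite hz. apply Rmult_le_compat_r; [apply Rabs_pos|apply hb].
Qed.

Lemma increment_lower (f f' : R -> R) (m x y : R) :
  (forall t, derivable_pt_lim f t (f' t)) -> x < y ->
  (forall z, x < z < y -> m < f' z) -> m * (y - x) < f y - f x.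
Proof.
  intros hd hxy hm.
  destruct (MVT_cor2 f f' x y hxy) as [z [hz hzr]]; [intros; apply hd|].
  rewrite hz. apply Rmult_lt_compat_r; [lra|auto].
Qed.

Lemma linearization_bound (f f' : R -> R) (Lam : R) :
  (forall t, derivable_pt_lim f t (f' t)) ->
  (forall t, Rabs (f' t - f' 0) <= Lam * Rabs t) ->
  forall x, Rabs (f x - f 0 - f' 0 * x) <= Lam * x ^ 2.
Proof.
  intros hd hl x.
  set (g := fun t => f t - f' 0 * t).
  assert (hg : forall t, derivable_pt_lim g t (f' t - f' 0)).
  { intros t. unfold g. apply derivable_pt_lim_minus; [apply hd|].
    pose proof (derivable_pt_lim_scal id (f' 0) t 1 (derivable_pt_lim_id t)) as H.
    rewrite Rmult_1_r in H. exact H. }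
  destruct (MVT_abs g (fun t => f' t - f' 0) 0 x) as [z [hz hzr]]; [intros; apply hg|].
  assert (hzx : Rabs z <= Rabs x).
  { unfold Rmin, Rmax in hzr; destruct Rle_dec; unfold Rabs; repeat destruct Rcase_abs; lra. }
  replace (f x - f 0 - f' 0 * x) with (g x - g 0) by (unfold g; ring).
  rewrite hz, Rminus_0_r.
  apply Rle_trans with (Lam * Rabs z * Rabs x).
  - apply Rmult_le_compat_r; [apply Rabs_pos|apply hl].
  - assert (0 <= Lam) by (pose proof (hl 1); rewrite Rabs_R1 in *; pose proof (Rabs_pos (f' 1 - f' 0)); lra).
    rewrite <- (pow2_abs x); simpl. rewrite Rmult_1_r, <- Rmult_assoc.
    apply Rmult_le_compat_r; [apply Rabs_pos|]. apply Rmult_le_compat_l; lra.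
Qed.

Lemma continuous_of_derivable (f f' : R -> R) (x : R) :
  (forall t, derivable_pt_lim f t (f' t)) -> continuous f x.
Proof.
  intros hd. apply continuity_pt_filterlim, derivable_continuous_pt.
  exists (f' x). apply hd.
Qed.

Lemma RInt_abs_bound (F : R -> R) (x y B : R) :
  (forall t, Rabs (F t) <= B) -> ex_RInt F x y -> Rabs (RInt F x y) <= B * Rabs (y - x).
Proof.
  intros hb he. rewrite Rmult_comm. destruct (Rle_dec x y) as [h|h].
  - rewrite (Rabs_right (y - x)) by lra. apply abs_RInt_le_const; auto.
  - rewrite <- (opp_RInt_swap F y x) by (apply ex_RInt_swap; auto).
    change (Rabs (- RInt F y x) <= Rabs (y - x) * B).
    rewrite Rabs_Ropp, (Rabs_left (y - x)), Ropp_minus_distr by lra.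
    apply abs_RInt_le_const; auto; [lra|apply ex_RInt_swap; auto].
Qed.

Lemma is_RInt_value (f : R -> R) (p q l l' : R) : is_RInt f p q l -> l = l' -> is_RInt f p q l'.
Proof. now intros hf <-. Qed.

Lemma is_RInt_vanishing (f : R -> R) (p q : R) :
  (forall x, Rmin p q < x < Rmax p q -> f x = 0) -> is_RInt f p q 0.
Proof.
  intros hf. apply is_RInt_ext with (fun _ => 0); [intros x hx; symmetry; auto|].
  apply (is_RInt_value _ _ _ _ _ (is_RInt_const p q 0)).
  change ((q - p) * 0 = 0); ring.
Qed.

Lemma is_RInt_rescaled_mean_zero (h : R -> R) (delta a M : R) :
  0 < delta -> 0 < a -> delta <= a * M ->
  (forall r, (r <= - delta \/ delta <= r) -> h r = 0) -> is_RInt h (- delta) delta 0 ->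
  is_RInt (fun y => h (a * y)) (- M) M 0.
Proof.
  intros hdelta ha haM hout hcore.
  assert (hleft : is_RInt h (a * - M + 0) (- delta) 0).
  { apply is_RInt_vanishing. intros x hx.
    rewrite Rmin_left, Rmax_right in hx by lra. apply hout; lra. }
  assert (hright : is_RInt h delta (a * M + 0) 0).
  { apply is_RInt_vanishing. intros x hx.
    rewrite Rmin_left, Rmax_right in hx by lra. apply hout; lra. }
  pose proof (is_RInt_Chasles h _ _ _ _ _ (is_RInt_Chasles h _ _ _ _ _ hleft hcore) hright)
    as hwhole.
  pose proof (is_RInt_scal _ _ _ (/ a) _ (is_RInt_comp_lin h a 0 (- M) M _ hwhole)) as hsub.
  apply (is_RInt_value _ _ _ _ 0) in hsub; [|change (/ a * (0 + 0 + 0) = 0); ring].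
  refine (is_RInt_ext _ _ _ _ _ _ hsub). intros y _.
  change (/ a * (a * h (a * y + 0)) = h (a * y)).
  rewrite Rplus_0_r. field. lra.
Qed.

Lemma is_RInt_quadratic_core (k : R -> R) (rho M A : R) :
  0 <= rho <= M -> (forall x, continuous k x) ->
  (forall x, rho < Rabs x -> k x = 0) -> (forall x, Rabs (k x) <= A * x ^ 2) ->
  exists V, is_RInt k (- M) M V /\ Rabs V <= 2 * A * rho ^ 3.
Proof.
  intros hrho hcont hout hquad.
  assert (hA : 0 <= A) by (pose proof (hquad 1); pose proof (Rabs_pos (k 1)); simpl in *; lra).
  assert (hleft : is_RInt k (- M) (- rho) 0).
  { apply is_RInt_vanishing. intros x hx.
    rewrite Rmin_left, Rmax_right in hx by lra. apply hout. rewrite Rabs_left; lra. }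
  assert (hright : is_RInt k rho M 0).
  { apply is_RInt_vanishing. intros x hx.
    rewrite Rmin_left, Rmax_right in hx by lra. apply hout. rewrite Rabs_right; lra. }
  assert (hex : ex_RInt k (- rho) rho) by (apply (@ex_RInt_continuous R_CompleteNormedModule); auto).
  exists (RInt k (- rho) rho). split.
  - apply (is_RInt_value _ _ _ (plus (plus 0 (RInt k (- rho) rho)) 0));
      [|change (0 + RInt k (- rho) rho + 0 = RInt k (- rho) rho); ring].
    apply (is_RInt_Chasles k _ rho); [|exact hright].
    apply (is_RInt_Chasles k _ (- rho)); [exact hleft|].
    exact (@RInt_correct R_CompleteNormedModule _ _ _ hex).
  - eapply Rle_trans; [apply abs_RInt_le_const with (M := A * rho ^ 2); auto; [lra|]|].
    + intros t ht. eapply Rle_trans; [apply hquad|]. apply Rmult_le_compat_l; [lra|].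
      rewrite <- (pow2_abs t). apply pow_incr. split; [apply Rabs_pos|].
      unfold Rabs; destruct Rcase_abs; lra.
    + right; ring.
Qed.

(* An unperturbed wave has the sign of x: far out by the bounds r0, near 0 because
   R0 increases there with slope above d0 and R0(0) = 0. *)
Lemma wave_sign (R0 dR0 : R -> R) (x0 r0 d0 : R) :
  0 < r0 -> 0 < d0 -> (forall x, derivable_pt_lim R0 x (dR0 x)) -> R0 0 = 0 ->
  (forall x, x0 < x -> r0 < R0 x) -> (forall x, x < - x0 -> R0 x < - r0) ->
  (forall x, Rabs x < x0 -> d0 < dR0 x) ->
  forall x, sgn (R0 x) = sgn x.
Proof.
  intros hr0 hd0 hd h0 hpos hneg hslope x.
  destruct (Rtotal_order x 0) as [hx|[->|hx]].
  - rewrite (sgn_neg x hx), sgn_neg; [reflexivity|].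
    destruct (Rlt_dec x (- x0)) as [far|near]; [specialize (hneg x far); lra|].
    assert (d0 * (0 - x) < R0 0 - R0 x); [|nra].
    apply (increment_lower _ dR0); auto.
    intros z hz; apply hslope; rewrite Rabs_left; lra.
  - now rewrite h0.
  - rewrite (sgn_pos x hx), sgn_pos; [reflexivity|].
    destruct (Rlt_dec x0 x) as [far|near]; [specialize (hpos x far); lra|].
    assert (d0 * (x - 0) < R0 x - R0 0); [|nra].
    apply (increment_lower _ dR0); auto.
    intros z hz; apply hslope; rewrite Rabs_right; lra.
Qed.

Lemma wave_slope_lipschitz (c cmin B : R) (R0 dR0 : R -> R) :
  0 < cmin <= c -> solves_wave_eq c R0 -> (forall x, derivable_pt_lim R0 x (dR0 x)) ->
  (forall x, Rabs (R0 x) <= B) ->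
  forall x y, Rabs (dR0 y - dR0 x) <= 4 * (B + 1) / cmin ^ 2 * Rabs (y - x).
Proof.
  intros hc hwave hd hB x y.
  destruct (hwave dR0 hd x y) as [pr ->]. rewrite <- (RInt_Reals _ _ _ pr).
  assert (hsrc : forall s, Rabs (R0 s - sgn (R0 s)) <= B + 1).
  { intros s. pose proof (sgn_abs_le (R0 s)). pose proof (hB s).
    pose proof (Rabs_triang (R0 s) (- sgn (R0 s))). rewrite Rabs_Ropp in *.
    unfold Rminus; lra. }
  assert (hint : Rabs (RInt (Delta1 (fun s => R0 s - sgn (R0 s))) x y)
                 <= 4 * (B + 1) * Rabs (y - x)).
  { apply RInt_abs_bound; [|exact (ex_RInt_Reals_1 _ _ _ pr)].
    intros t. unfold Delta1; cbv beta.
    pose proof (hsrc (t + 1)). pose proof (hsrc t). pose proof (hsrc (t - 1)).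
    unfold Rabs in *. repeat destruct Rcase_abs; lra. }
  assert (hcc : cmin ^ 2 <= c ^ 2) by (simpl; nra).
  unfold Rdiv. rewrite Rabs_mult, (Rabs_right (/ c ^ 2))
    by (apply Rle_ge, Rlt_le, Rinv_0_lt_compat; nra).
  assert (/ c ^ 2 <= / cmin ^ 2) by (apply Rinv_le_contravar; nra).
  assert (0 < / c ^ 2) by (apply Rinv_0_lt_compat; nra).
  pose proof (Rabs_pos (RInt (Delta1 (fun s => R0 s - sgn (R0 s))) x y)).
  pose proof (Rabs_pos (y - x)). nra.
Qed.

Definition wave_slope_constant (c0 c1 D0 : R) : R := 4 * (D0 / (1 - c1 ^ 2) + 1) / c0 ^ 2.

Lemma wave_slope_constant_nonneg (c0 c1 D0 : R) :
  0 < c0 -> c0 < c1 < 1 -> 0 <= D0 -> 0 <= wave_slope_constant c0 c1 D0.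
Proof.
  intros hc0 hc1 hD0. unfold wave_slope_constant.
  apply Rdiv_le_0_compat; [|apply pow_lt; lra].
  assert (0 <= D0 / (1 - c1 ^ 2)); [|lra].
  apply Rdiv_le_0_compat; [lra|]. simpl; nra.
Qed.

Lemma unperturbed_uniform (c0 x0 r0 d0 D0 c1 c : R) (Rc : R -> (R -> R) -> Prop)
  (R0 dR0 : R -> R) :
  unperturbed_waves c0 x0 r0 d0 D0 Rc -> c0 < c1 < 1 -> c0 <= c <= c1 -> Rc c R0 ->
  (forall x, derivable_pt_lim R0 x (dR0 x)) ->
  R0 0 = 0 /\ d0 < dR0 0 /\ (forall x, sgn (R0 x) = sgn x) /\
  forall x y, Rabs (dR0 y - dR0 x) <= wave_slope_constant c0 c1 D0 * Rabs (y - x).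
Proof.
  intros [hc0 [hx0 [hr0 [hd0 [hD0 hwaves]]]]] hc1 hc hR0 hd.
  destruct (hwaves c ltac:(lra)) as [_ [_ [_ [_ [_ [_ [_ [_ [_ [_ [_ hprops]]]]]]]]]]].
  destruct (hprops R0 hR0) as [_ [hwave [h0 [hbound [hpos [hneg hslope]]]]]].
  specialize (hslope dR0 hd).
  split; [exact h0|]. split; [apply hslope; rewrite Rabs_R0; lra|].
  split; [exact (wave_sign R0 dR0 x0 r0 d0 hr0 hd0 hd h0 hpos hneg hslope)|].
  unfold wave_slope_constant.
  apply (wave_slope_lipschitz c c0 _ R0); auto; [lra|].
  intros x. eapply Rle_trans; [apply hbound|].
  assert (c ^ 2 <= c1 ^ 2) by (simpl; nra).
  apply Rmult_le_compat_l; [lra|]. apply Rinv_le_contravar; nra.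
Qed.

Lemma smoothed_sign_integral (psi psi' phi phi' : R -> R) (delta CPsi Lam rho M : R) :
  0 < delta ->
  (forall r, derivable_pt_lim psi r (psi' r)) -> (forall r, Rabs (psi' r) <= CPsi / delta) ->
  (forall r, (r <= - delta \/ delta <= r) -> psi r = sgn r) ->
  is_RInt (fun r => psi r - sgn r) (- delta) delta 0 ->
  (forall x, derivable_pt_lim phi x (phi' x)) -> phi 0 = 0 ->
  (forall t, Rabs (phi' t - phi' 0) <= Lam * Rabs t) ->
  0 < phi' 0 -> delta < phi' 0 * rho -> rho <= M ->
  (forall x, rho < Rabs x -> psi (phi x) = sgn x) ->
  exists V, is_RInt (fun x => psi (phi x) - sgn x) (- M) M V /\
            Rabs V <= 2 * (CPsi / delta * Lam) * rho ^ 3.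
Proof.
  intros hdelta hpsi hpsi' hout hmean hphi hphi0 hslope ha harho hrhoM hfar.
  set (a := phi' 0) in *.
  set (k := fun x => psi (phi x) - psi (a * x)).
  set (h := fun r => psi r - sgn r).
  assert (hrho : 0 <= rho) by nra.
  assert (hsplit : forall x, psi (phi x) - sgn x = k x + h (a * x)).
  { intros x. unfold k, h. rewrite sgn_scale by exact ha. ring. }
  assert (hlin : forall x, derivable_pt_lim (fun t => a * t) x a).
  { intros x. pose proof (derivable_pt_lim_scal id a x 1 (derivable_pt_lim_id x)) as H.
    rewrite Rmult_1_r in H. exact H. }
  assert (hk_cont : forall x, continuous k x).
  { intros x. apply (continuous_of_derivable k
      (fun t => psi' (phi t) * phi' t - psi' (a * t) * a)).
    intros t. unfold k. apply derivable_pt_lim_minus.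
    - apply (derivable_pt_lim_comp phi psi); auto.
    - apply (derivable_pt_lim_comp (fun t => a * t) psi); auto. }
  assert (hk_far : forall x, rho < Rabs x -> k x = 0).
  { intros x hx.
    assert (hax : a * x <= - delta \/ delta <= a * x)
      by (unfold Rabs in hx; destruct Rcase_abs in hx; [left|right]; nra).
    unfold k. rewrite hfar, (hout _ hax), sgn_scale by assumption. ring. }
  assert (hk_quad : forall x, Rabs (k x) <= CPsi / delta * Lam * x ^ 2).
  { intros x. unfold k. rewrite Rmult_assoc.
    eapply Rle_trans; [apply (increment_bound psi psi'); auto|].
    apply Rmult_le_compat_l; [pose proof (hpsi' 0); pose proof (Rabs_pos (psi' 0)); lra|].
    pose proof (linearization_bound phi phi' Lam hphi hslope x) as H.
    rewrite hphi0, Rminus_0_r in H. exact H. }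
  destruct (is_RInt_quadratic_core k rho M (CPsi / delta * Lam)) as [V [hV hVbound]]; auto.
  exists V. split; [|exact hVbound].
  apply (is_RInt_value _ _ _ (plus V 0)); [|change (V + 0 = V); ring].
  apply (is_RInt_ext (fun x => k x + h (a * x))); [intros x _; symmetry; apply hsplit|].
  apply (is_RInt_plus k (fun x => h (a * x))); [exact hV|].
  apply (is_RInt_rescaled_mean_zero h delta a M); auto; [nra|].
  intros r hr. unfold h. rewrite hout by exact hr. ring.
Qed.

(* Admissibility: R0 + S crosses from -delta to delta with slope above d0/2, hence
   within |x| <= (2/d0) delta, and psi (R0 + S) = sgn x outside this window. *)
Lemma admissible_window (delta d0 : R) (psi R0 dR0 S dS : R -> R) :
  0 < delta -> 0 < d0 -> d0 < dR0 0 -> R0 0 + S 0 = 0 ->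
  (forall x, derivable_pt_lim R0 x (dR0 x)) -> (forall x, derivable_pt_lim S x (dS x)) ->
  (forall r, (r <= - delta \/ delta <= r) -> psi r = sgn r) ->
  admissible delta R0 dR0 S dS ->
  d0 / 2 < dR0 0 + dS 0 /\
  forall x, 2 / d0 * delta < Rabs x -> psi (R0 x + S x) = sgn x.
Proof.
  intros hdelta hd0 hslope0 hphi0 hdR0 hdS hout
    [xm [xp [hx [hxm [hxp [hleft [hright hslope]]]]]]].
  set (phi := fun x => R0 x + S x).
  assert (hphi : forall x, derivable_pt_lim phi x (dR0 x + dS x))
    by (intros x; apply derivable_pt_lim_plus; auto).
  assert (hsteep : forall z, xm < z < xp -> d0 / 2 < dR0 z + dS z)
    by (intros z hz; destruct (hslope z hz); lra).
  assert (hK : 2 / d0 * delta = delta / (d0 / 2)) by (field; lra).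
  assert (hxm_near : - (2 / d0 * delta) < xm).
  { assert (d0 / 2 * (0 - xm) < phi 0 - phi xm)
      by (apply (increment_lower _ _ _ _ _ hphi); [lra|intros; apply hsteep; lra]).
    unfold phi in *. rewrite hK. apply Ropp_lt_cancel. rewrite Ropp_involutive.
    apply Rmult_lt_reg_l with (d0 / 2); [lra|]. field_simplify; lra. }
  assert (hxp_near : xp < 2 / d0 * delta).
  { assert (d0 / 2 * (xp - 0) < phi xp - phi 0)
      by (apply (increment_lower _ _ _ _ _ hphi); [lra|intros; apply hsteep; lra]).
    unfold phi in *. rewrite hK.
    apply Rmult_lt_reg_l with (d0 / 2); [lra|]. field_simplify; lra. }
  split; [apply hsteep; lra|].
  intros x hfar. unfold Rabs in hfar; destruct Rcase_abs in hfar.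
  - specialize (hleft x ltac:(lra)). rewrite hout by (left; lra). rewrite !sgn_neg by lra. reflexivity.
  - specialize (hright x ltac:(lra)). rewrite hout by (right; lra). rewrite !sgn_pos by lra. reflexivity.
Qed.

Lemma lipschitz_nonneg (f : R -> R) (L : R) : lipschitz f L -> 0 <= L.
Proof.
  intros hL. specialize (hL 1 0). rewrite Rminus_0_r, Rabs_R1 in hL.
  pose proof (Rabs_pos (f 1 - f 0)). lra.
Qed.

Lemma slope_deviation (dR0 dS : R -> R) (L0 L : R) :
  (forall x y, Rabs (dR0 y - dR0 x) <= L0 * Rabs (y - x)) -> lipschitz dS L ->
  forall t, Rabs (dR0 t + dS t - (dR0 0 + dS 0)) <= (L0 + L) * Rabs t.
Proof.
  intros hR0 hS t. specialize (hR0 0 t). specialize (hS t 0). rewrite Rminus_0_r in *.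
  pose proof (Rabs_triang (dR0 t - dR0 0) (dS t - dS 0)).
  replace (dR0 t - dR0 0 + (dS t - dS 0)) with (dR0 t + dS t - (dR0 0 + dS 0)) in * by ring.
  lra.
Qed.

Lemma I_zero_is_RInt (dPsi : R -> R -> R) (delta : R) :
  I_zero dPsi delta -> is_RInt (fun r => dPsi delta r - sgn r) (- delta) delta 0.
Proof. intros [pr hpr]. rewrite <- hpr. apply ex_RInt_Reals_aux_1. Qed.

Section AdmissiblePerturbation.

Variables (delta d0 CPsi L0 : R) (dPsi : R -> R -> R) (ddPsi R0 dR0 S dS : R -> R).

Hypothesis delta_pos : 0 < delta.
Hypothesis d0_pos : 0 < d0.
Hypothesis dPsi_deriv : forall r, derivable_pt_lim (dPsi delta) r (ddPsi r).
Hypothesis dPsi_bound : forall r, Rabs (dPsi delta r) <= CPsi.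
Hypothesis ddPsi_bound : forall r, Rabs (ddPsi r) <= CPsi / delta.
Hypothesis dPsi_sgn : forall r, (r <= - delta \/ delta <= r) -> dPsi delta r = sgn r.
Hypothesis dPsi_mean : is_RInt (fun r => dPsi delta r - sgn r) (- delta) delta 0.
Hypothesis R0_deriv : forall x, derivable_pt_lim R0 x (dR0 x).
Hypothesis R0_zero : R0 0 = 0.
Hypothesis R0_steep : d0 < dR0 0.
Hypothesis R0_sgn : forall x, sgn (R0 x) = sgn x.
Hypothesis dR0_lip : forall x y, Rabs (dR0 y - dR0 x) <= L0 * Rabs (y - x).
Hypothesis S_deriv : forall x, derivable_pt_lim S x (dS x).
Hypothesis S_zero : S 0 = 0.
Hypothesis S_admissible : admissible delta R0 dR0 S dS.

Lemma Gmap_sgn (x : R) : Gmap dPsi delta R0 S x = dPsi delta (R0 x + S x) - sgn x.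
Proof. unfold Gmap. now rewrite R0_sgn. Qed.

Lemma Gmap_bounded (x : R) : Rabs (Gmap dPsi delta R0 S x) <= CPsi + 1.
Proof.
  rewrite Gmap_sgn. pose proof (dPsi_bound (R0 x + S x)). pose proof (sgn_abs_le x).
  pose proof (Rabs_triang (dPsi delta (R0 x + S x)) (- sgn x)).
  rewrite Rabs_Ropp in *. unfold Rminus. lra.
Qed.

Lemma profile_window :
  d0 / 2 < dR0 0 + dS 0 /\
  forall x, 2 / d0 * delta < Rabs x -> dPsi delta (R0 x + S x) = sgn x.
Proof. apply admissible_window; auto. lra. Qed.

Lemma Gmap_support (x : R) :
  Gmap dPsi delta R0 S x <> 0 -> - (2 / d0 * delta) <= x <= 2 / d0 * delta.
Proof.
  intros hx. destruct (Rle_dec (Rabs x) (2 / d0 * delta)) as [hnear|hfar].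
  - unfold Rabs in hnear; destruct Rcase_abs in hnear; lra.
  - exfalso. apply hx. rewrite Gmap_sgn, (proj2 profile_window); [ring|lra].
Qed.

Lemma Gmap_integral (L M : R) :
  lipschitz dS L -> 2 / d0 * delta <= M ->
  exists pr : Riemann_integrable (Gmap dPsi delta R0 S) (- M) M,
    Rabs (RiemannInt pr) <= 2 * (2 / d0) ^ 3 * CPsi * (L0 + L) * delta ^ 2.
Proof.
  intros hL hM. destruct profile_window as [hslope0 _].
  assert (hspread : 1 < (dR0 0 + dS 0) * (2 / d0)).
  { replace 1 with (d0 / 2 * (2 / d0)) by (field; lra).
    apply Rmult_lt_compat_r; [apply Rdiv_lt_0_compat|]; lra. }
  destruct (smoothed_sign_integral (dPsi delta) ddPsi (fun x => R0 x + S x)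
    (fun x => dR0 x + dS x) delta CPsi (L0 + L) (2 / d0 * delta) M) as [V [hV hVbound]];
    auto; try lra.
  - intros x; apply derivable_pt_lim_plus; auto.
  - apply slope_deviation; auto.
  - nra.
  - intros x hx. apply (proj2 profile_window); lra.
  - assert (hVG : is_RInt (Gmap dPsi delta R0 S) (- M) M V)
      by exact (is_RInt_ext _ _ _ _ _ (fun x _ => eq_sym (Gmap_sgn x)) hV).
    exists (ex_RInt_Reals_0 _ _ _ (ex_intro _ V hVG)).
    rewrite <- RInt_Reals, (is_RInt_unique _ _ _ _ hVG).
    eapply Rle_trans; [exact hVbound|]. right; field; lra.
Qed.

End AdmissiblePerturbation.

Lemma constant_absorption (P L0 L C delta : R) :
  0 <= P -> 0 <= L0 -> 0 <= L -> P * (L0 + 1) <= C ->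
  P * (L0 + L) * delta ^ 2 <= C * (1 + L) * delta ^ 2.
Proof.
  intros hP hL0 hL hC. apply Rmult_le_compat_r; [apply pow2_ge_0|].
  apply Rle_trans with (P * (L0 + 1) * (1 + L)); [|apply Rmult_le_compat_r; lra].
  rewrite Rmult_assoc. apply Rmult_le_compat_l; nra.
Qed.

Theorem lemma3p3 (c0 x0 r0 d0 D0 : R) (Rc : R -> (R -> R) -> Prop) (c1 : R)
  (Psi dPsi ddPsi : R -> R -> R) (CPsi : R) :
  unperturbed_waves c0 x0 r0 d0 D0 Rc ->
  c0 < c1 < 1 ->
  potential_family Psi dPsi ddPsi CPsi ->
  exists C : R, 0 < C /\
    forall (delta c : R) (R0 dR0 S dS : R -> R),
      0 < delta -> I_zero dPsi delta ->
      c0 <= c <= c1 -> Rc c R0 ->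
      (forall x, derivable_pt_lim R0 x (dR0 x)) ->
      inX S -> (forall x, derivable_pt_lim S x (dS x)) ->
      admissible delta R0 dR0 S dS ->
      (forall x, Rabs (Gmap dPsi delta R0 S x) <= C) /\
      (forall x, Gmap dPsi delta R0 S x <> 0 -> - (C * delta) <= x <= C * delta) /\
      (forall L, lipschitz dS L ->
         forall M, C * delta <= M ->
           exists pr : Riemann_integrable (Gmap dPsi delta R0 S) (- M) M,
             Rabs (RiemannInt pr) <= C * (1 + L) * delta ^ 2).
Proof.
  intros hwaves hc1 hpot.
  pose proof hwaves as [hc0 [_ [_ [hd0 [hD0 _]]]]].
  assert (hCPsi : 0 <= CPsi).
  { destruct (hpot 1 Rlt_0_1) as [_ [_ [_ [_ [hb _]]]]].
    pose proof (hb 0). pose proof (Rabs_pos (dPsi 1 0)). lra. }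
  set (K := 2 / d0). set (L0 := wave_slope_constant c0 c1 D0).
  set (P := 2 * K ^ 3 * CPsi).
  assert (hK : 0 < K) by (apply Rdiv_lt_0_compat; lra).
  assert (hP : 0 <= P) by (unfold P; pose proof (pow_lt K 3 hK); nra).
  assert (hL0 : 0 <= L0) by (apply wave_slope_constant_nonneg; lra).
  exists (CPsi + 1 + K + P * (L0 + 1)). split; [nra|].
  intros delta c R0 dR0 S dS hdelta hI hc hR0 hdR0 [_ [hS0 _]] hdS hadm.
  destruct (unperturbed_uniform c0 x0 r0 d0 D0 c1 c Rc R0 dR0)
    as [hR00 [hslope0 [hsgn hlip0]]]; auto.
  destruct (hpot delta hdelta) as [_ [hpsi [_ [hout [hbound hbound']]]]].
  pose proof (I_zero_is_RInt dPsi delta hI) as hmean.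
  assert (hKC : K * delta <= (CPsi + 1 + K + P * (L0 + 1)) * delta)
    by (apply Rmult_le_compat_r; nra).
  split; [|split].
  - intros x. eapply Rle_trans; [eapply Gmap_bounded; eauto|nra].
  - intros x hx.
    pose proof (Gmap_support delta d0 dPsi R0 dR0 S dS hdelta hd0 hout hdR0 hR00 hslope0
      hsgn hdS hS0 hadm x hx) as hwin.
    fold K in hwin. lra.
  - intros L hL M hM.
    destruct (Gmap_integral delta d0 CPsi L0 dPsi (ddPsi delta) R0 dR0 S dS) with L M
      as [pr hpr]; auto; [fold K; lra|].
    fold K in hpr; fold P in hpr. exists pr. eapply Rle_trans; [exact hpr|].
    apply constant_absorption; auto; [eapply lipschitz_nonneg; eauto|lra].
Qed.
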